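(* Let $F=\frac19\begin{pmatrix}1&1&1\\1&1&1\\1&1&1\end{pmatrix}$ (box blur filter). Then the equation $F*X=B$ with the reflexive boundary condition, for unknown $X\in\mathbb{R}^{m\times n}$, has a unique solution for every $B\in\mathbb{R}^{m\times n}$ if and only if $m,n\notin\{3l: l\in\mathbb{N}\}$.
   Context: $\mathbb{N}=\{1,2,3,\dots\}$. For $F=[f_{ij}]\in\mathbb{R}^{3\times3}$ and $X=[x_{ij}]\in\mathbb{R}^{m\times n}$, the convolution $F*X\in\mathbb{R}^{m\times n}$ is defined by $[F*X]_{ij}=\sum_{l_1=1}^3\sum_{l_2=1}^3 f_{l_1l_2}\,x_{i-l_1+2,\,j-l_2+2}$ for $1\le i\le m$, $1\le j\le n$, where the reflexive boundary condition sets $x_{0j}=x_{1j}$, $x_{m+1,j}=x_{mj}$, $x_{i0}=x_{i1}$, $x_{i,n+1}=x_{in}$ (for all indices $i\in\{0,\dots,m+1\}$, $j\in\{0,\dots,n+1\}$, so corners are also determined, e.g. $x_{00}=x_{11}$). *)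

From mathcomp Require Import all_boot all_order all_algebra.
From mathcomp Require Import reals.
Set Implicit Arguments. Unset Strict Implicit. Unset Printing Implicit Defensive.
Import GRing.Theory Num.Theory.
Local Open Scope ring_scope.

(* Reflexive boundary: an (extended, 0-based) index k in {-1,...,m} is
   clamped into {0,...,m-1}; here k is given as k+1 (a nat in {0..m+1})
   to avoid negative numbers: refl_idx m k1 is the 0-based index of the 1-based index k1 after reflexive clamping into {1..m+1}. *)
Definition refl_idx (m : nat) (k1 : nat) : 'I_m.+1 :=
  inord (minn k1.-1 m).

(* Paper (1-based): [F*X]_{ij} = sum_{l1,l2=1}^3 f_{l1 l2} x_{i-l1+2, j-l2+2}.
   With 0-based i' = i-1, l1' = l1-1, the row index of x (1-based) is
   i'-l1'+2 = (i'+2-l1'), shifted 0-based index is (i'+1-l1'); we pass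
   (i'+2-l1') = 0-based-index + 1 to refl_idx. *)
Definition conv_refl (R : pzRingType) (m n : nat)
  (F : 'M[R]_3) (X : 'M[R]_(m.+1, n.+1)) : 'M[R]_(m.+1, n.+1) :=
  \matrix_(i < m.+1, j < n.+1)
    \sum_(l1 < 3) \sum_(l2 < 3)
      F l1 l2 * X (refl_idx m (i + 2 - l1)%N) (refl_idx n (j + 2 - l2)%N).

Definition box_blur (R : fieldType) : 'M[R]_3 := \matrix_(i, j) (9%:R)^-1.

From mathcomp Require Import all_boot all_order all_algebra.
From mathcomp Require Import reals.
From mathcomp Require Import zify ring.
Set Implicit Arguments. Unset Strict Implicit. Unset Printing Implicit Defensive.
Import GRing.Theory Num.Theory.
Local Open Scope ring_scope.

(* Since the box filter is the outer product of (1,1,1)/3 with itself, the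
   reflexive convolution factors as X |-> (1/9) A_m X A_n^T, where A_N is the
   tridiagonal all-ones matrix with both corner entries doubled.  A vector x with A_N x = 0 is forced by the first N equations to
   be x_0 times the 3-periodic pattern 1, -2, 1, 1, -2, 1, ...; the last
   equation then reads (2 p(N) + p(N-1)) x_0 = 0, where the coefficient is
   0 if 3 divides N+1 and +-3 otherwise. *)

Lemma unitmx_ker0 (F : fieldType) n (A : 'M[F]_n) :
  (forall x : 'cV_n, A *m x = 0 -> x = 0) -> A \in unitmx.
Proof.
move=> ker0; rewrite -unitmx_tr -row_free_unit; apply: inj_row_free => v.
move/(congr1 trmx); rewrite trmx_mul trmxK trmx0 => /ker0.
by move/(congr1 trmx); rewrite trmxK trmx0.
Qed.

Lemma mulmx_sandwich_unit (F : fieldType) m n (A : 'M[F]_m) (C : 'M[F]_n.+1) :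
  (forall X : 'M_(m, n.+1), A *m X *m C = 0 -> X = 0) -> A \in unitmx.
Proof.
move=> inj; apply: unitmx_ker0 => x Ax0; apply/colP => i.
have /matrixP/(_ i 0) : x *m (const_mx 1 : 'rV_n.+1) = 0.
  by apply: inj; rewrite mulmxA Ax0 !mul0mx.
by rewrite !mxE big_ord1 mxE mulr1.
Qed.

Lemma sandwich_bijective (F : fieldType) m n (A : 'M[F]_m.+1) (C : 'M[F]_n.+1) :
  (forall B, exists! X, A *m X *m C = B) <-> A \in unitmx /\ C \in unitmx.
Proof.
split=> [solvable|[uA uC] B].
  have inj X : A *m X *m C = 0 -> X = 0.
    have [X0 [_ X0_unique]] := solvable 0.
    by move=> AXC0; rewrite -(X0_unique X AXC0) (X0_unique 0) // mulmx0 mul0mx.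
  split; first exact: mulmx_sandwich_unit inj.
  rewrite -unitmx_tr; apply: (@mulmx_sandwich_unit _ _ m _ A^T) => X CXA0.
  apply: trmx_inj; rewrite trmx0; apply: inj.
  by apply: trmx_inj; rewrite trmx0 !trmx_mul trmxK mulmxA.
exists (invmx A *m B *m invmx C); split=> [|X <-].
  by rewrite !mulmxA mulmxV // mul1mx -mulmxA mulVmx // mulmx1.
by rewrite !mulmxA mulVmx // mul1mx -mulmxA mulmxV // mulmx1.
Qed.

(* [minn] and the truncated predecessor [0.-1 = 0] implement the reflexive
   boundary. *)
Definition box3 (V : nmodType) (N : nat) (y : nat -> V) (i : nat) : V :=
  y (minn i.+1 N) + y i + y i.-1.

Lemma box3_last (V : nmodType) N (y : nat -> V) : box3 N y N = y N *+ 2 + y N.-1.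
Proof. by rewrite /box3 (minn_idPr (leqnSn N)) mulr2n. Qed.

Section BoxKernel.
Variable F : fieldType.
Hypothesis three_neq0 : 3%:R != 0 :> F.

Definition nullpat (k : nat) : F := if (k %% 3 == 1)%N then -2 else 1.

Lemma nullpatSS k : nullpat k.+2 = - (nullpat k + nullpat k.+1).
Proof.
rewrite /nullpat -[k.+2]addn2 -[k.+1]addn1 -(modnDml k 1) -(modnDml k 2).
by case: (k %% 3)%N (ltn_mod k 3) => [|[|[|]]] //= _; ring.
Qed.

Lemma nullpat_last_eq0 N : (nullpat N *+ 2 + nullpat N.-1 == 0) = (3 %| N.+1)%N.
Proof.
case: N => [|M].
  by rewrite [X in X == 0](_ : _ = 3%:R) ?(negbTE three_neq0) // /nullpat /=; ring.
rewrite /nullpat /= /dvdn -[M.+2]addn2 -[M.+1]addn1 -(modnDml M 1) -(modnDml M 2).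
case: (M %% 3)%N (ltn_mod M 3) => [|[|[|]]] //= _.
- by rewrite [X in X == 0](_ : _ = - 3%:R) ?oppr_eq0 ?(negbTE three_neq0) //; ring.
- by rewrite [X in X == 0](_ : _ = 0) ?eqxx //; ring.
- by rewrite [X in X == 0](_ : _ = 3%:R) ?(negbTE three_neq0) //; ring.
Qed.

Lemma box3_nullpat N i : (3 %| N.+1)%N -> (i <= N)%N -> box3 N nullpat i = 0.
Proof.
move=> dvd3N iN.
case: (ltngtP i N) iN => // [ltiN _|-> _]; last first.
  by rewrite box3_last; apply/eqP; rewrite nullpat_last_eq0.
rewrite /box3 (minn_idPl ltiN); case: i ltiN => [|i] _ /=.
  by rewrite /nullpat /=; ring.
by rewrite nullpatSS; ring.
Qed.

Lemma box3_eq0_nullpat N (y : nat -> F) :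
  (forall i, (i < N)%N -> box3 N y i = 0) ->
  forall k, (k <= N)%N -> y k = nullpat k * y 0%N.
Proof.
move=> y_box.
have y_rec i : (i < N)%N -> y i.+1 = - (y i + y i.-1).
  move=> ltiN; apply/eqP; rewrite -addr_eq0 addrA.
  by have := y_box i ltiN; rewrite /box3 (minn_idPl ltiN) => ->.
suff ind k : (k < N)%N -> y k = nullpat k * y 0%N /\ y k.+1 = nullpat k.+1 * y 0%N.
  case=> [|k] kN; first by rewrite /nullpat mul1r.
  by case: (ind k kN).
elim: k => [|k IHk] ltkN.
  by rewrite y_rec // /nullpat /=; split; ring.
have [yk yk1] := IHk (ltnW ltkN); split=> //.
by rewrite y_rec //= yk yk1 nullpatSS; ring.
Qed.

Lemma box3_eq0 N (y : nat -> F) : ~~ (3 %| N.+1)%N ->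
  (forall i, (i <= N)%N -> box3 N y i = 0) -> forall k, (k <= N)%N -> y k = 0.
Proof.
move=> ndvd3N y_box.
have y_pat := box3_eq0_nullpat (fun i ltiN => y_box i (ltnW ltiN)).
have y0 : y 0%N = 0.
  have := y_box N (leqnn N).
  rewrite box3_last (y_pat N) // (y_pat N.-1) ?leq_pred //.
  rewrite -mulrnAl -mulrDl => /eqP; rewrite mulf_eq0 nullpat_last_eq0.
  by rewrite (negbTE ndvd3N) => /eqP.
by move=> k kN; rewrite y_pat // y0 mulr0.
Qed.

End BoxKernel.

Lemma refl_idxE N k : refl_idx N k = minn k.-1 N :> nat.
Proof. by rewrite inordK // ltnS geq_minr. Qed.

Lemma sum_refl_idx (V : nmodType) N (y : nat -> V) (i : 'I_N.+1) :
  \sum_(l < 3) y (refl_idx N (i + 2 - l)) = box3 N y i.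
Proof.
have leiN : (i <= N)%N by rewrite -ltnS.
rewrite !big_ord_recl big_ord0 addr0 /box3 !refl_idxE /bump /= addrA.
have -> : (i + 2 - 0).-1 = i.+1 by lia.
have -> : (i + 2 - 1).-1 = i by lia.
have -> : (i + 2 - 2).-1 = i.-1 by lia.
by rewrite (minn_idPl leiN) (minn_idPl (leq_trans (leq_pred i) leiN)).
Qed.

Definition blur_mx (R : pzRingType) N : 'M[R]_N.+1 :=
  \matrix_(i, j) \sum_(l < 3) (refl_idx N (i + 2 - l) == j)%:R.

Lemma mul_blur_mx (R : pzRingType) N p (X : 'M[R]_(N.+1, p)) i k :
  (blur_mx R N *m X) i k = \sum_(l < 3) X (refl_idx N (i + 2 - l)) k.
Proof.
rewrite mxE; under eq_bigr do rewrite mxE big_distrl /=.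
rewrite exchange_big; apply: eq_bigr => l _.
rewrite (bigD1 (refl_idx N (i + 2 - l))) //= eqxx mul1r big1 ?addr0 // => j.
by rewrite eq_sym => /negbTE ->; rewrite mul0r.
Qed.

Lemma conv_refl_const (R : comPzRingType) (c : R) (K : 'M[R]_3) m n
    (X : 'M[R]_(m.+1, n.+1)) :
  (forall l1 l2, K l1 l2 = c) ->
  conv_refl K X = (c *: blur_mx R m) *m X *m (blur_mx R n)^T.
Proof.
move=> K_const; apply/matrixP => i j.
rewrite -!scalemxAl [RHS]mxE -[_ *m _^T]trmxK trmx_mul trmxK.
rewrite mxE [in RHS]mxE mul_blur_mx mulr_sumr.
under [RHS]eq_bigr do rewrite mxE mul_blur_mx mulr_sumr.
rewrite exchange_big; apply: eq_bigr => l2 _; apply: eq_bigr => l1 _.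
by rewrite K_const.
Qed.

Lemma blur_mx_unit (F : fieldType) N : 3%:R != 0 :> F ->
  (blur_mx F N \in unitmx) = ~~ (3 %| N.+1)%N.
Proof.
move=> three_neq0; apply/idP/idP => [unitA|ndvd3N].
  apply/negP => dvd3N.
  pose x : 'cV[F]_N.+1 := \col_i nullpat F i.
  have Ax0 : blur_mx F N *m x = 0.
    apply/colP => i; rewrite mul_blur_mx mxE.
    under eq_bigr do rewrite mxE.
    by rewrite sum_refl_idx box3_nullpat // -ltnS.
  have /colP/(_ 0) := mulKmx unitA x; rewrite Ax0 mulmx0 !mxE /nullpat /=.
  by move=> /esym/eqP; rewrite oner_eq0.
apply: unitmx_ker0 => x Ax0; apply/colP => i.
pose y k := x (inord k) 0.
have y_box k : (k <= N)%N -> box3 N y k = 0.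
  move=> leKN; rewrite -[k](@inordK N) // -sum_refl_idx /y.
  under eq_bigr do rewrite inord_val.
  by rewrite -mul_blur_mx Ax0 mxE.
by have := box3_eq0 three_neq0 ndvd3N y_box (leq_ord i); rewrite /y inord_val mxE.
Qed.

Theorem corollary3 (R : realType) (m n : nat) :
  (forall B : 'M[R]_(m.+1, n.+1),
      exists! X : 'M[R]_(m.+1, n.+1), conv_refl (box_blur R) X = B)
  <-> (~~ (3 %| m.+1)%N /\ ~~ (3 %| n.+1)%N).
Proof.
have three_neq0 : 3%:R != 0 :> R by rewrite pnatr_eq0.
have ninth_neq0 : (9%:R : R)^-1 != 0 by rewrite invr_eq0 pnatr_eq0.
have conv_blur X : conv_refl (box_blur R) X =
    ((9%:R)^-1 *: blur_mx R m) *m X *m (blur_mx R n)^T.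
  by apply: conv_refl_const => l1 l2; rewrite mxE.
rewrite /unique; setoid_rewrite conv_blur.
by rewrite sandwich_bijective unitmxZ ?unitfE // unitmx_tr !blur_mx_unit.
Qed.
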